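(* Let $M=\begin{bmatrix} A & B\\ 0 & C\end{bmatrix}$ be an ACI-matrix over a field $\mathbb{F}$ whose lower-left zero block is Big or Medium. Then the following are equivalent: (i) $A$ is FRmR and $C$ is FCmR; (ii) $\mathrm{maxRank}(M)=\mathrm{rows}(A)+\mathrm{cols}(C)$.
   Context: Let $\mathbb{F}$ be a field. An ACI-matrix is a matrix with entries in $\mathbb{F}[x_1,\dots,x_k]$ whose entries are polynomials of degree at most one and such that no indeterminate appears in two different columns. A completion is an assignment of values in $\mathbb{F}$ to all indeterminates; $\mathrm{maxRank}(M)$ is the maximum rank of a completion. $\mathrm{rows}(\cdot)$, $\mathrm{cols}(\cdot)$ denote numbers of rows and columns. Matrices of size $0\times q$ (wide degenerate), $p\times 0$ (tall degenerate) and $0\times 0$ (void) are ACI-matrices and blocks may be degenerate. An ACI-matrix $N$ is FRmR if $\mathrm{maxRank}(N)=\mathrm{rows}(N)$ and FCmR if $\mathrm{maxRank}(N)=\mathrm{cols}(N)$; by convention tall degenerate ones are FRmR, wide degenerate ones are FCmR, and the void one is both. For an $m\times n$ block matrix $\begin{bmatrix} A & B\\ 0 & C\end{bmatrix}$ whose lower-left block $0$ is $r\times s$, the zero block is Big if $r+s>\max\{m,n\}$ and Medium if $r+s=\max\{m,n\}$. *)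

From HB Require Import structures.
From mathcomp Require Import all_boot all_order all_algebra.
From mathcomp Require Import boolp.
Set Implicit Arguments. Unset Strict Implicit. Unset Printing Implicit Defensive.
Import GRing.Theory.
Local Open Scope ring_scope.

(* An m x n matrix with entries in F[x_0,...,x_{k-1}] of degree <= 1,
   represented by its constant part and, for each indeterminate x_l,
   the matrix of coefficients of x_l:  entry (i,j) = cst i j + sum_l coef l i j * x_l. *)
Record affmx (F : fieldType) (m n k : nat) := AffMx {
  acst : 'M[F]_(m, n);
  acoef : 'I_k -> 'M[F]_(m, n)
}.

Definition is_ACI (F : fieldType) m n k (M : affmx F m n k) : Prop :=
  forall (l : 'I_k) (i1 i2 : 'I_m) (j1 j2 : 'I_n),
    acoef M l i1 j1 != 0 -> acoef M l i2 j2 != 0 -> j1 = j2.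

Definition completion (F : fieldType) m n k (M : affmx F m n k) (v : 'I_k -> F)
  : 'M[F]_(m, n) := acst M + \sum_(l < k) v l *: acoef M l.

Definition maxRank (F : fieldType) m n k (M : affmx F m n k) : nat :=
  \max_(r < (minn m n).+1 | `[< exists v, \rank (completion M v) = r >]) r.

Definition FRmR (F : fieldType) m n k (M : affmx F m n k) : Prop :=
  maxRank M = m \/ n = 0%N.
Definition FCmR (F : fieldType) m n k (M : affmx F m n k) : Prop :=
  maxRank M = n \/ m = 0%N.

Definition aff_map (F : fieldType) m n m' n' k
  (f : 'M[F]_(m, n) -> 'M[F]_(m', n')) (M : affmx F m n k) : affmx F m' n' k :=
  AffMx (f (acst M)) (fun l => f (acoef M l)).

Definition blkA (F : fieldType) p r s q k (M : affmx F (p + r) (s + q) k) :=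
  aff_map (@ulsubmx F p r s q) M.
Definition blkB (F : fieldType) p r s q k (M : affmx F (p + r) (s + q) k) :=
  aff_map (@ursubmx F p r s q) M.
Definition blkC (F : fieldType) p r s q k (M : affmx F (p + r) (s + q) k) :=
  aff_map (@drsubmx F p r s q) M.
Definition lowleft_zero (F : fieldType) p r s q k (M : affmx F (p + r) (s + q) k) : Prop :=
  dlsubmx (acst M) = 0 /\ forall l, dlsubmx (acoef M l) = 0.

(** Completing an upper block-triangular ACI-matrix gives the block-triangular
    matrix of the completions of its blocks, so a completion of M has rank at
    most [rows A + rank C] and at most [rank A + cols C]; hence rank
    [rows A + cols C] forces A to be completed row free and C column full.
    Conversely, when A is row free the rank of [[A, B]; [0, C]] is
    [rows A + rank C]. Since no indeterminate occurs both in the first [s]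
    columns (those of A) and in the last [q] columns (those of C), a completion
    making A row free and one making C column full can be merged into a single
    completion of M. The Big-or-Medium hypothesis amounts to [rows A <= cols A]
    and [cols C <= rows C], which is exactly what makes the degenerate
    conventions for FRmR and FCmR agree with "some completion has full rank". *)

From HB Require Import structures.
From mathcomp Require Import all_boot all_order all_algebra.
From mathcomp Require Import boolp.
From mathcomp Require Import zify.
Set Implicit Arguments. Unset Strict Implicit. Unset Printing Implicit Defensive.
Import GRing.Theory.
Local Open Scope ring_scope.

Section UpperBlockTriangularRank.
Variables (F : fieldType) (m1 m2 n1 n2 : nat).
Variables (A : 'M[F]_(m1, n1)) (B : 'M[F]_(m1, n2)) (C : 'M[F]_(m2, n2)).

Lemma rank_utblock_leq_rows : (\rank (block_mx A B 0 C) <= m1 + \rank C)%N.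
Proof.
rewrite block_mxEv -addsmxE; apply: leq_trans (mxrank_adds_leqif _ _) _.
by rewrite rank_row_0mx leq_add2r rank_leq_row.
Qed.

Lemma rank_utblock_leq_cols : (\rank (block_mx A B 0 C) <= \rank A + n2)%N.
Proof.
rewrite -mxrank_tr tr_block_mx trmx0 block_mxEv -addsmxE.
apply: leq_trans (mxrank_adds_leqif _ _) _.
by rewrite rank_row_mx0 mxrank_tr leq_add2l rank_leq_row.
Qed.

Lemma rank_utblock_row_free :
  row_free A -> \rank (block_mx A B 0 C) = (\rank A + \rank C)%N.
Proof.
move=> freeA.
(* clear B by a column operation, using a right inverse of A *)
pose E := block_mx 1%:M (- (pinvmx A *m B)) 0 1%:M.
have freeE : row_free E by rewrite row_free_unit unitmxE det_ublock !det1 mulr1 unitr1.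
rewrite -(mxrankMfree _ freeE) mulmx_block !mulmx1 !mulmx0 !mul0mx !addr0 add0r.
by rewrite mulmxN mulmxA mulmxVp // mul1mx addNr rank_diag_block_mx.
Qed.

End UpperBlockTriangularRank.

Section MaxRank.
Variables (F : fieldType) (m n k : nat) (M : affmx F m n k).

Lemma rank_ltn_minn (A : 'M[F]_(m, n)) : (\rank A < (minn m n).+1)%N.
Proof. by rewrite ltnS leq_min rank_leq_row rank_leq_col. Qed.

Lemma rank_completion_leq_maxRank v : (\rank (completion M v) <= maxRank M)%N.
Proof.
apply: (@leq_bigmax_cond _ _ (fun i : 'I__ => nat_of_ord i) (Ordinal (rank_ltn_minn _))).
by apply/asboolP; exists v.
Qed.

Lemma maxRank_attained : exists v, \rank (completion M v) = maxRank M.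
Proof.
have attained0 : `[< exists v, \rank (completion M v) =
    Ordinal (rank_ltn_minn (completion M (fun=> 0%R))) >] by apply/asboolP; exists (fun=> 0%R).
rewrite /maxRank (bigmax_eq_arg _ attained0).
by case: arg_maxnP => // i /asboolP.
Qed.

Lemma maxRank_leq b : (forall v, \rank (completion M v) <= b)%N -> (maxRank M <= b)%N.
Proof. by have [v <-] := maxRank_attained; apply. Qed.

Lemma FRmR_row_free :
  (m <= n)%N -> FRmR M <-> exists v, row_free (completion M v).
Proof.
move=> le_mn; split.
- case=> [rankM | n0].
    by have [v rankv] := maxRank_attained; exists v; rewrite /row_free rankv rankM.
  exists (fun=> 0%R); apply/eqP; have := rank_leq_col (completion M (fun=> 0%R)); lia.
- case=> v /eqP rankv; left; apply/eqP; rewrite eqn_leq maxRank_leq => [|w]; last first.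
    exact: rank_leq_row.
  by rewrite -{1}rankv rank_completion_leq_maxRank.
Qed.

Lemma FCmR_row_full :
  (n <= m)%N -> FCmR M <-> exists v, row_full (completion M v).
Proof.
move=> le_nm; split.
- case=> [rankM | m0].
    by have [v rankv] := maxRank_attained; exists v; rewrite /row_full rankv rankM.
  exists (fun=> 0%R); apply/eqP; have := rank_leq_row (completion M (fun=> 0%R)); lia.
- case=> v /eqP rankv; left; apply/eqP; rewrite eqn_leq maxRank_leq => [|w]; last first.
    exact: rank_leq_col.
  by rewrite -{1}rankv rank_completion_leq_maxRank.
Qed.

Lemma eq_completion v w :
  (forall l, acoef M l != 0 -> v l = w l) -> completion M v = completion M w.
Proof.
move=> vw; congr (_ + _); apply: eq_bigr => l _.
by have [->|/vw ->] := eqVneq (acoef M l) 0; rewrite ?scaler0.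
Qed.

End MaxRank.

Lemma completion_aff_map (F : fieldType) m n m' n' k
    (f : {linear 'M[F]_(m, n) -> 'M[F]_(m', n')}) (M : affmx F m n k) v :
  completion (aff_map f M) v = f (completion M v).
Proof.
rewrite /completion linearD linear_sum; congr (_ + _).
by apply: eq_bigr => l _; rewrite linearZ.
Qed.

Section Blocks.
Variables (F : fieldType) (p r s q k : nat) (M : affmx F (p + r) (s + q) k).

Lemma completion_blkA v : completion (blkA M) v = ulsubmx (completion M v).
Proof. exact: (completion_aff_map (lsubmx \o usubmx)). Qed.

Lemma completion_blkB v : completion (blkB M) v = ursubmx (completion M v).
Proof. exact: (completion_aff_map (rsubmx \o usubmx)). Qed.

Lemma completion_blkC v : completion (blkC M) v = drsubmx (completion M v).
Proof. exact: (completion_aff_map (rsubmx \o dsubmx)). Qed.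

Lemma completion_utblock v : lowleft_zero M ->
  completion M v = block_mx (completion (blkA M) v) (completion (blkB M) v)
                            0 (completion (blkC M) v).
Proof.
case; rewrite /dlsubmx => cst0 coef0.
have dl0 : dlsubmx (completion M v) = 0.
  rewrite -[LHS](completion_aff_map (lsubmx \o dsubmx)) /completion /= cst0 add0r.
  by rewrite big1 // => l _; rewrite coef0 scaler0.
by rewrite completion_blkA completion_blkB completion_blkC -dl0 submxK.
Qed.

Lemma ACI_blkA_blkC_disjoint l :
  is_ACI M -> acoef (blkA M) l != 0 -> acoef (blkC M) l = 0.
Proof.
move=> aci /matrix0Pn[i [j]]; rewrite !mxE => Aij.
apply/matrixP=> i' j'; rewrite !mxE; apply/eqP.
by apply: contraFT (eq_lrshift j j') => Cij; apply/eqP; apply: aci Aij Cij.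
Qed.

Lemma ACI_merge_completions vA vC : is_ACI M ->
  exists v, completion (blkA M) v = completion (blkA M) vA /\
            completion (blkC M) v = completion (blkC M) vC.
Proof.
move=> aci; exists (fun l => if acoef (blkA M) l != 0 then vA l else vC l).
split; apply: eq_completion => l; first by move=> ->.
by case: ifP => // /(ACI_blkA_blkC_disjoint aci) ->; rewrite eqxx.
Qed.

End Blocks.

Theorem theorem2p4 (F : fieldType) (p r s q k : nat)
  (M : affmx F (p + r) (s + q) k) :
  is_ACI M ->
  lowleft_zero M ->
  (* zero block is Big or Medium: r + s >= max(rows M, cols M) *)
  (maxn (p + r) (s + q) <= r + s)%N ->
  ((FRmR (blkA M) /\ FCmR (blkC M)) <-> maxRank M = (p + q)%N).
Proof.
move=> aci low0; rewrite geq_max => /andP[le_rows le_cols].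
rewrite FRmR_row_free ?FCmR_row_full; [|lia|lia].
split.
- case=> -[vA freeA] [vC fullC].
  have [v [vA_eq vC_eq]] := ACI_merge_completions vA vC aci.
  apply/eqP; rewrite eqn_leq; apply/andP; split.
    apply: maxRank_leq => w; rewrite (completion_utblock w low0).
    by apply: leq_trans (rank_utblock_leq_rows _ _ _) _; rewrite leq_add2l rank_leq_col.
  apply: leq_trans (rank_completion_leq_maxRank M v).
  rewrite (completion_utblock v low0) vA_eq vC_eq rank_utblock_row_free //.
  by rewrite (eqP freeA) (eqP fullC).
- move=> rankM; have [v] := maxRank_attained M.
  rewrite rankM (completion_utblock v low0) => rank_pq.
  split; exists v; [rewrite -row_leq_rank | rewrite -col_leq_rank].
    by rewrite -(leq_add2r q) -rank_pq rank_utblock_leq_cols.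
  by rewrite -(leq_add2l p) -rank_pq rank_utblock_leq_rows.
Qed.
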